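(* Let $n\ge2$, $p\ge1$, and consider the change-point model $\boldsymbol{X}=\boldsymbol{Z}\boldsymbol{\beta}+\boldsymbol{c}_\tau\phi+\boldsymbol{\Gamma}\boldsymbol{\xi}$ with a possible change at an unknown $\tau\in[n-1]$, where $\boldsymbol{Z}$ is a known $n\times p$ covariate matrix, $\boldsymbol{c}_\tau\in\mathbb{R}^n$ is a known vector of covariates specific to a change at $\tau$, $\boldsymbol{\beta}\in\mathbb{R}^p$ and $\phi\in\mathbb{R}$ are unknown parameters, $\boldsymbol{\Gamma}$ is a known invertible $n\times n$ matrix and $\boldsymbol{\xi}\sim N_n(0,I_n)$. Then there is an $h^*\in\mathcal{H}_{1,2n-2}$ equivalent to the likelihood-ratio test (over unknown $\tau\in[n-1]$) for testing $\phi=0$ against $\phi\neq0$, i.e. $h^*(\boldsymbol{x})=1$ exactly when this likelihood-ratio test rejects.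
   Context: Neural network classes: for $L\ge1$ and widths $\boldsymbol{m}=(m_1,\ldots,m_L)$, set $m_0=n$, $m_{L+1}=1$; for $\boldsymbol{b}\in\mathbb{R}^r$ let $\sigma_{\boldsymbol{b}}(y_1,\ldots,y_r)=(\max(y_1-b_1,0),\ldots,\max(y_r-b_r,0))$. $\mathcal{H}_{L,\boldsymbol{m}}$ is the class of all functions $h:\mathbb{R}^n\to\{0,1\}$ of the form $h(\boldsymbol{x})=\sigma^*_\lambda W_L\sigma_{\boldsymbol{b}_L}\cdots W_1\sigma_{\boldsymbol{b}_1}W_0\boldsymbol{x}$, where $\sigma^*_\lambda(x)=\mathbb{1}\{x>\lambda\}$ with $\lambda>0$, $W_\ell\in\mathbb{R}^{m_{\ell+1}\times m_\ell}$, $\boldsymbol{b}_\ell\in\mathbb{R}^{m_\ell}$. $\mathcal{H}_{1,m}$ denotes the class with one hidden layer of width $m$. *)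

From HB Require Import structures.
From mathcomp Require Import all_boot all_order all_algebra.
From mathcomp Require Import all_classical all_reals all_analysis.
Set Implicit Arguments. Unset Strict Implicit. Unset Printing Implicit Defensive.
Import Order.TTheory GRing.Theory Num.Theory.
Local Open Scope ring_scope.
Local Open Scope classical_set_scope.

Section Defs.
Variable R : realType.

Definition relu_shift (m : nat) (b y : 'cV[R]_m) : 'cV[R]_m :=
  \col_i Num.max (y i 0 - b i 0) 0.

Definition in_H1 (n m : nat) (h : 'cV[R]_n -> bool) : Prop :=
  exists (W0 : 'M[R]_(m, n)) (b : 'cV[R]_m) (W1 : 'M[R]_(1, m)) (lam : R),
    0 < lam /\ forall x, h x = (lam < (W1 *m relu_shift b (W0 *m x)) 0 0).

Definition sqnorm (n : nat) (v : 'cV[R]_n) : R := \sum_i (v i 0) ^+ 2.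

(* density at x of N_n(mu, Gam Gam^T), i.e. of X = mu + Gam xi, xi ~ N(0, I_n) *)
Definition gauss_dens (n : nat) (Gam : 'M[R]_n) (mu x : 'cV[R]_n) : R :=
  ((Num.sqrt (2 * pi)) ^+ n)^-1 * `|\det Gam|^-1 *
  expR (- (sqnorm (invmx Gam *m (x - mu))) / 2).

(* likelihood-ratio statistic for H0: phi = 0 vs H1: phi <> 0, tau unknown in [n-1]
   (tau = i.+1 for i : 'I_(n-1)) *)
Definition lr_stat (n p : nat) (Z : 'M[R]_(n, p)) (c : 'I_n.-1 -> 'cV[R]_n)
    (Gam : 'M[R]_n) (x : 'cV[R]_n) : R :=
  sup [set y | exists (tau : 'I_n.-1) (beta : 'cV[R]_p) (phi : R),
                 y = gauss_dens Gam (Z *m beta + phi *: c tau) x]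
  / sup [set y | exists beta : 'cV[R]_p, y = gauss_dens Gam (Z *m beta) x].

Definition lr_test_rejects (n p : nat) (Z : 'M[R]_(n, p)) (c : 'I_n.-1 -> 'cV[R]_n)
    (Gam : 'M[R]_n) (k : R) (x : 'cV[R]_n) : Prop :=
  k < lr_stat Z c Gam x.
End Defs.

(* After whitening, y = Gam^-1 x, the Gaussian likelihood of a mean model Zb is
   maximised at (normalising constant) * exp(-|Q y|^2/2), where Q is the orthogonal
   projection onto the orthogonal complement of the column space of Gam^-1 Z. Adding the column Gam^-1 c_tau is one Gram-Schmidt
   step: with w = Q Gam^-1 c_tau the residual sum of squares drops by (w.y)^2/|w|^2.
   Hence the likelihood ratio is exp(max_tau (w_tau.y)^2/(2|w_tau|^2)), and for k >= 1
   the test rejects iff |w_tau^T Gam^-1 x| > sqrt(2 ln k |w_tau|^2) for some tau. Each such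
   event is detected by a pair of ReLUs applied to +-w_tau^T Gam^-1 x whose weighted sum
   exceeds 1 exactly on it, so n - 1 pairs give a network of width 2n - 2. *)

From HB Require Import structures.
From mathcomp Require Import all_boot all_order all_algebra.
From mathcomp Require Import all_classical all_reals all_analysis.
From mathcomp Require Import ring lra zify.
Set Implicit Arguments. Unset Strict Implicit. Unset Printing Implicit Defensive.
Import Order.TTheory GRing.Theory Num.Theory.
Local Open Scope ring_scope.

Section ResidualProjection.
Variables (R : realFieldType) (n : nat).
Implicit Types (u v w y : 'cV[R]_n) (Q : 'M[R]_n).

Definition dot u v : R := (u^T *m v) 0 0.

Lemma dotC u v : dot u v = dot v u.
Proof. by rewrite /dot -[v in LHS]trmxK -trmx_mul mxE. Qed.

Lemma dotDr u v w : dot u (v + w) = dot u v + dot u w.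
Proof. by rewrite /dot mulmxDr mxE. Qed.

Lemma dotBr u v w : dot u (v - w) = dot u v - dot u w.
Proof. by rewrite /dot mulmxBr !mxE. Qed.

Lemma dotZr a u v : dot u (a *: v) = a * dot u v.
Proof. by rewrite /dot -scalemxAr mxE. Qed.

Lemma dotDl u v w : dot (v + w) u = dot v u + dot w u.
Proof. by rewrite dotC dotDr !(dotC u). Qed.

Lemma dot0l u : dot 0 u = 0.
Proof. by rewrite /dot linear0 mul0mx mxE. Qed.

Lemma dotE u v : dot u v = \sum_i u i 0 * v i 0.
Proof. by rewrite /dot mxE; apply: eq_bigr => i _; rewrite mxE. Qed.

Lemma dot_ge0 u : 0 <= dot u u.
Proof. by rewrite dotE sumr_ge0 // => i _; rewrite -expr2 sqr_ge0. Qed.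

Lemma dot_eq0 u : (dot u u == 0) = (u == 0).
Proof.
apply/eqP/eqP => [|->]; last exact: dot0l.
rewrite dotE => /psumr_eq0P u0; apply/matrixP => i j; rewrite (ord1 j) mxE.
have /eqP := u0 (fun k _ => sqr_ge0 (u k 0)) i isT.
by rewrite mulf_eq0 orbb => /eqP.
Qed.

Lemma mulmx_dot u v : u *m (u^T *m v) = dot u v *: u.
Proof. by rewrite [u^T *m v]mx11_scalar mul_mx_scalar. Qed.

(* [Q] is the orthogonal projection onto the orthogonal complement of the column space
   of [A], the residual maker of least squares. *)
Definition resid_proj p (A : 'M[R]_(n, p)) Q : Prop :=
  [/\ Q^T = Q, Q *m Q = Q, Q *m A = 0 & forall y, exists beta, y - Q *m y = A *m beta].

Section FixedProjection.
Variables (p : nat) (A : 'M[R]_(n, p)) (Q : 'M[R]_n).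
Hypothesis hQ : resid_proj A Q.

Lemma resid_proj_dot_sym u v : dot (Q *m u) v = dot u (Q *m v).
Proof. by case: hQ => QT _ _ _; rewrite /dot trmx_mul QT mulmxA. Qed.

Lemma resid_proj_sqnorm y : dot (Q *m y) (Q *m y) = dot y (Q *m y).
Proof. by case: hQ => _ QQ _ _; rewrite resid_proj_dot_sym mulmxA QQ. Qed.

Lemma resid_proj_le y beta :
  dot (Q *m y) (Q *m y) <= dot (y - A *m beta) (y - A *m beta).
Proof.
case: hQ => _ _ QA /(_ y) [gamma yE].
have orth z : dot (Q *m y) (A *m z) = 0.
  by rewrite resid_proj_dot_sym mulmxA QA mul0mx dotC dot0l.
have -> : y - A *m beta = Q *m y + A *m (gamma - beta).
  by rewrite mulmxBr -yE addrA [Q *m y + _]addrC subrK.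
by rewrite dotDl !dotDr orth dotC orth addr0 add0r lerDl dot_ge0.
Qed.

Lemma resid_proj_attained y :
  exists beta, dot (y - A *m beta) (y - A *m beta) = dot (Q *m y) (Q *m y).
Proof.
case: hQ => _ _ _ /(_ y) [beta yE].
by exists beta; rewrite -yE opprB addrC subrK.
Qed.

(* Gram-Schmidt step for the new column [v]; if [Q *m v = 0] the junk value [0^-1 = 0]
   makes it [Q], which is then still correct. *)
Definition resid_update v : 'M[R]_n :=
  Q - (dot (Q *m v) (Q *m v))^-1 *: ((Q *m v) *m (Q *m v)^T).

Lemma resid_update_mul v y :
  resid_update v *m y = Q *m y - ((dot (Q *m v) (Q *m v))^-1 * dot (Q *m v) y) *: (Q *m v).
Proof.
rewrite /resid_update; set w := Q *m v.
by rewrite mulmxBl -scalemxAl -mulmxA mulmx_dot scalerA.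
Qed.

Lemma resid_proj_row_mx v : resid_proj (row_mx v A) (resid_update v).
Proof.
have [QT QQ QA range] := hQ.
rewrite /resid_update; set w := Q *m v; set c := (dot w w)^-1.
have Qw : Q *m w = w by rewrite mulmxA QQ.
have wTQ : w^T *m Q = w^T by rewrite -[in LHS]QT -trmx_mul Qw.
have wTA : w^T *m A = 0 by rewrite trmx_mul QT -mulmxA QA mulmx0.
have wv : dot w v = dot w w by rewrite /w resid_proj_sqnorm resid_proj_dot_sym.
have cw : (c * dot w w) *: w = w.
  have [->|w0] := eqVneq w 0; first by rewrite scaler0.
  by rewrite mulVf ?scale1r // dot_eq0.
have ww_ww : (w *m w^T) *m (w *m w^T) = dot w w *: (w *m w^T).
  by rewrite mulmxA -[w *m _ *m w]mulmxA mulmx_dot scalemxAl.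
split.
- by rewrite linearB /= linearZ /= trmx_mul trmxK QT.
- rewrite mulmxBl !mulmxBr -!scalemxAl -!scalemxAr mulmxA Qw QQ.
  rewrite -[w *m w^T *m Q]mulmxA wTQ ww_ww (scalerA c (dot w w)).
  by rewrite [(c * _) *: _]scalemxAl cw subrr subr0.
- rewrite mul_mx_row mulmxBl -scalemxAl -mulmxA mulmx_dot wv scalerA cw -/w subrr.
  by rewrite mulmxBl -scalemxAl QA -mulmxA wTA mulmx0 scaler0 subrr row_mx0.
- move=> y; have [beta yE] := range y; have [gamma vE] := range v.
  set a := c * dot w y.
  exists (col_mx a%:M (beta - a *: gamma)).
  rewrite mul_row_col mul_mx_scalar mulmxBr -scalemxAr -yE -vE.
  rewrite mulmxBl -scalemxAl -mulmxA mulmx_dot scalerA -/a.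
  by rewrite -/w; apply/matrixP => i j; rewrite !mxE; ring.
Qed.

End FixedProjection.

Lemma resid_update_sqnorm p (A : 'M[R]_(n, p)) Q v y : resid_proj A Q ->
  dot (resid_update Q v *m y) (resid_update Q v *m y) =
  dot (Q *m y) (Q *m y) - dot (Q *m v) y ^+ 2 / dot (Q *m v) (Q *m v).
Proof.
move=> hQ; rewrite (resid_proj_sqnorm (resid_proj_row_mx hQ v)) resid_update_mul.
by rewrite dotBr dotZr !(resid_proj_sqnorm hQ) (dotC y (Q *m v)); ring.
Qed.

Lemma resid_proj_exists p (A : 'M[R]_(n, p)) : exists Q, resid_proj A Q.
Proof.
elim: p A => [|p IH] A.
  exists 1%:M; split; rewrite ?trmx1 ?mulmx1 ?thinmx0 ?mul1mx //.
  by move=> y; exists 0; rewrite mul1mx subrr mulmx0.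
have [Q hQ] := IH (rsubmx (A : 'M[R]_(n, 1 + p))).
exists (resid_update Q (lsubmx (A : 'M[R]_(n, 1 + p)))).
by have := resid_proj_row_mx hQ (lsubmx (A : 'M[R]_(n, 1 + p))); rewrite hsubmxK.
Qed.

End ResidualProjection.

Lemma ltr_sum_exists (R : realDomainType) (I : finType) (F G : I -> R) :
  (forall i, F i <= G i) -> (\sum_i F i < \sum_i G i <-> exists i, F i < G i).
Proof.
move=> FG; split => [|[i Fi]]; last first.
  by rewrite (bigD1 i) //= [ltRHS](bigD1 i) //= ltr_leD // ler_sum.
apply: contraPP => /forallNP noFG; apply/negP; rewrite -leNgt ler_sum // => i _.
by rewrite leNgt; apply/negP/noFG.
Qed.

Section ReluNetworks.
Variable R : realType.

Definition relu_pair (c1 c2 b1 b2 u : R) : R :=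
  c1 * Num.max (u - b1) 0 + c2 * Num.max (- u - b2) 0.

Lemma relu_pair_abs_gt (t : R) : exists c1 c2 b1 b2 : R, forall u,
  1 <= relu_pair c1 c2 b1 b2 u /\ (1 < relu_pair c1 c2 b1 b2 u <-> t < `|u|).
Proof.
rewrite /relu_pair; have [t_gt0|t_le0] := ltrP 0 t.
  exists (2 * t)^-1, (2 * t)^-1, (- t), (- t) => u.
  have t2_gt0 : 0 < 2 * t by rewrite mulr_gt0.
  rewrite -mulrDr ler_pdivlMl // ltr_pdivlMl // mulr1 !maxEle.
  have [u0|u0] := lerP 0 u; [rewrite ger0_norm | rewrite ltr0_norm] => //;
    case: (lerP (u - - t) 0); case: (lerP (- u - - t) 0) => *;
    by split; [lra | split => ?; lra].
have [t_lt0|t0] := ltrP t 0; last first.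
  have {t_le0 t0} -> : t = 0 by apply/le_anti; rewrite t_le0 t0.
  (* a symmetric pair is only flat on [[-t, t]], which degenerates at [t = 0] *)
  exists 2, 1, 0, (-1) => u; rewrite !maxEle.
  have [u0|u0] := lerP 0 u; [rewrite ger0_norm | rewrite ltr0_norm] => //;
    case: (lerP (u - 0) 0); case: (lerP (- u - -1) 0) => *;
    by split; [lra | split => ?; lra].
exists 1, 1, (-1), (-1) => u; have := normr_ge0 u; rewrite !maxEle.
case: (lerP (u - -1) 0); case: (lerP (- u - -1) 0) => *;
  by split; [lra | split => ?; lra].
Qed.

Lemma relu_shift_col_mx m1 m2 (b1 y1 : 'cV[R]_m1) (b2 y2 : 'cV[R]_m2) :
  relu_shift (col_mx b1 b2) (col_mx y1 y2) = col_mx (relu_shift b1 y1) (relu_shift b2 y2).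
Proof. by apply/matrixP => i j; rewrite !mxE; case: (fintype.split i) => k; rewrite !mxE. Qed.

Lemma relu_pairs_output n m (W : 'M[R]_(m, n)) (c1 c2 b1 b2 : 'I_m -> R) x :
  (row_mx (\row_i c1 i) (\row_i c2 i) *m
    relu_shift (col_mx (\col_i b1 i) (\col_i b2 i)) (col_mx W (- W) *m x)) 0 0 =
  \sum_i relu_pair (c1 i) (c2 i) (b1 i) (b2 i) ((W *m x) i 0).
Proof.
rewrite mul_col_mx mulNmx relu_shift_col_mx mul_row_col mxE !mxE -big_split /=.
by apply: eq_bigr => i _; rewrite !mxE.
Qed.

Lemma in_H1_exists_abs_gt n m (r : 'I_m -> 'rV[R]_n) (t : 'I_m -> R) : (0 < m)%N ->
  exists h, in_H1 (m + m) h /\ forall x, h x <-> exists i, t i < `|(r i *m x) 0 0|.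
Proof.
move=> m_gt0; pose W := \matrix_i r i.
have /fin_all_exists [c1 /fin_all_exists [c2 /fin_all_exists [b1 /fin_all_exists [b2 pair]]]]
  := fun i => relu_pair_abs_gt (t i).
pose W1 := row_mx (\row_i c1 i) (\row_i c2 i).
pose b := col_mx (\col_i b1 i) (\col_i b2 i).
exists (fun x => m%:R < (W1 *m relu_shift b (col_mx W (- W) *m x)) 0 0); split.
  by exists (col_mx W (- W)), b, W1, m%:R; rewrite ltr0n.
move=> x; have Wx i : (W *m x) i 0 = (r i *m x) 0 0.
  by rewrite !mxE; apply: eq_bigr => j _; rewrite !mxE.
rewrite relu_pairs_output; under eq_bigr do rewrite Wx.
rewrite -[m in m%:R]card_ord -sumr_const.
rewrite ltr_sum_exists => [|i]; last exact: (pair i _).1.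
by split=> [] [i /(pair i _).2]; exists i.
Qed.

End ReluNetworks.

Section GaussianLikelihood.
Variables (R : realType) (n : nat) (Gam : 'M[R]_n).
Hypothesis hGam : Gam \in unitmx.

Definition gauss_const : R := ((Num.sqrt (2 * pi)) ^+ n)^-1 * `|\det Gam|^-1.

Lemma gauss_const_gt0 : 0 < gauss_const.
Proof.
rewrite mulr_gt0 // invr_gt0 ?exprn_gt0 ?sqrtr_gt0 ?mulr_gt0 ?pi_gt0 //.
by rewrite normr_gt0 -unitfE -unitmxE.
Qed.

Definition max_lik (Q : 'M[R]_n) (x : 'cV[R]_n) : R :=
  let y := invmx Gam *m x in gauss_const * expR (- dot (Q *m y) (Q *m y) / 2).

Lemma gauss_densE mu x : gauss_dens Gam mu x =
  let r := invmx Gam *m x - invmx Gam *m mu in gauss_const * expR (- dot r r / 2).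
Proof.
by rewrite /gauss_dens /sqnorm dotE mulmxBr.
Qed.

Section MeanModel.
Variables (p : nat) (B : 'M[R]_(n, p)) (Q : 'M[R]_n).
Hypothesis hQ : resid_proj (invmx Gam *m B) Q.

Lemma gauss_dens_le_max_lik x beta : gauss_dens Gam (B *m beta) x <= max_lik Q x.
Proof.
rewrite gauss_densE /= mulmxA ler_pM2l ?gauss_const_gt0 // ler_expR.
by rewrite ler_pM2r ?invr_gt0 // lerN2 (resid_proj_le hQ).
Qed.

Lemma max_lik_attained x : exists beta, gauss_dens Gam (B *m beta) x = max_lik Q x.
Proof.
have [beta Ebeta] := resid_proj_attained hQ (invmx Gam *m x).
by exists beta; rewrite gauss_densE /= mulmxA Ebeta.
Qed.

End MeanModel.

Lemma max_lik_gt0 Q x : 0 < max_lik Q x.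
Proof. by rewrite mulr_gt0 ?gauss_const_gt0 ?expR_gt0. Qed.

Lemma max_lik_update_ratio p (A : 'M[R]_(n, p)) Q v x : resid_proj A Q ->
  max_lik (resid_update Q v) x / max_lik Q x =
  expR (dot (Q *m v) (invmx Gam *m x) ^+ 2 / dot (Q *m v) (Q *m v) / 2).
Proof.
move=> hQ; rewrite /max_lik (resid_update_sqnorm _ _ hQ) -mulf_div.
by rewrite divff ?gt_eqF ?gauss_const_gt0 // mul1r -expRB; congr expR; lra.
Qed.

End GaussianLikelihood.

Lemma sup_maximum (R : realType) (E : set R) m : E m -> ubound E m -> sup E = m.
Proof.
move=> Em ubm; apply/le_anti/andP; split; first by apply: ge_sup => //; exists m.
by apply: ub_le_sup => //; exists m.
Qed.

Section LikelihoodRatio.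
Variables (R : realType) (n p : nat) (Z : 'M[R]_(n, p)) (c : 'I_n.-1 -> 'cV[R]_n).
Variables (Gam Q : 'M[R]_n).
Hypotheses (hGam : Gam \in unitmx) (hQ : resid_proj (invmx Gam *m Z) Q).

Definition change_score tau x : R :=
  let w := Q *m (invmx Gam *m c tau) in dot w (invmx Gam *m x) ^+ 2 / dot w w.

Let Qc tau := resid_update Q (invmx Gam *m c tau).

Lemma lr_statE x : (0 < n.-1)%N -> exists j,
  (forall tau, max_lik Gam (Qc tau) x <= max_lik Gam (Qc j) x) /\
  lr_stat Z c Gam x = max_lik Gam (Qc j) x / max_lik Gam Q x.
Proof.
move=> n1_gt0; have [j _ jmax] :=
  arg_maxP (fun tau => max_lik Gam (Qc tau) x) (isT : xpredT (Ordinal n1_gt0)).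
exists j; split => [tau|]; first exact: jmax.
have hQc tau : resid_proj (invmx Gam *m row_mx (c tau) Z) (Qc tau).
  by rewrite mul_mx_row; apply: resid_proj_row_mx.
have meanE tau beta phi : Z *m beta + phi *: c tau = row_mx (c tau) Z *m col_mx phi%:M beta.
  by rewrite mul_row_col mul_mx_scalar addrC.
rewrite /lr_stat; congr (_ / _); apply: sup_maximum.
- have [gamma Egamma] := max_lik_attained (hQc j) x.
  exists j, (dsubmx gamma), (usubmx gamma 0 0).
  by rewrite meanE -mx11_scalar vsubmxK Egamma.
- move=> _ [tau [beta [phi ->]]]; rewrite meanE.
  exact: le_trans (gauss_dens_le_max_lik hGam (hQc tau) _ _) (jmax tau isT).
- by have [beta <-] := max_lik_attained hQ x; exists beta.
- by move=> _ [beta ->]; apply: gauss_dens_le_max_lik.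
Qed.

Lemma lr_test_rejectsE k x : (0 < n.-1)%N ->
  lr_test_rejects Z c Gam k x <-> exists tau, k < expR (change_score tau x / 2).
Proof.
move=> n1_gt0; rewrite /lr_test_rejects /change_score.
have [j [jmax ->]] := lr_statE x n1_gt0.
have ratioE tau := max_lik_update_ratio hGam (invmx Gam *m c tau) x hQ.
split=> [kj|[tau]]; first by exists j; rewrite -(ratioE j).
rewrite -(ratioE tau) => /lt_le_trans; apply.
by rewrite ler_pM2r ?invr_gt0 ?max_lik_gt0 ?jmax.
Qed.

End LikelihoodRatio.

Lemma lt_expR_score (R : realType) (k a b : R) :
  1 <= k -> 0 <= b -> (b = 0 -> a = 0) ->
  k < expR (a ^+ 2 / b / 2) <-> Num.sqrt (2 * ln k * b) < `|a|.
Proof.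
move=> k_ge1 b_ge0 ab0; have k_gt0 : k \in Num.pos by rewrite posrE; lra.
have lnk_ge0 : 0 <= 2 * ln k by rewrite mulr_ge0 ?ln_ge0.
rewrite -{1}(lnK k_gt0) ltr_expR.
have [b0|b_gt0] := eqVneq b 0.
  by rewrite b0 (ab0 b0) expr0n /= !mul0r mulr0 sqrtr0 normr0; split => //; lra.
have -> : (ln k < a ^+ 2 / b / 2) = (2 * ln k * b < a ^+ 2).
  rewrite -ltr_pdivlMr ?lt_def ?b_gt0 //; apply/idP/idP => ?; lra.
rewrite -[Num.sqrt _ < _](ltr_pXn2r (isT : (0 < 2)%N)) ?nnegrE ?sqrtr_ge0 ?normr_ge0 //.
rewrite sqr_sqrtr; last exact: mulr_ge0.
by rewrite real_normK ?num_real.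
Qed.

Theorem lemma3p2 (R : realType) (n p : nat) (hn : (2 <= n)%N) (hp : (1 <= p)%N)
    (Z : 'M[R]_(n, p)) (c : 'I_n.-1 -> 'cV[R]_n) (Gam : 'M[R]_n)
    (hGam : Gam \in unitmx) (k : R) :
  exists h : 'cV[R]_n -> bool,
    in_H1 (2 * n - 2)%N h /\
    forall x : 'cV[R]_n, h x <-> lr_test_rejects Z c Gam k x.
Proof.
have n1_gt0 : (0 < n.-1)%N by rewrite ltn_predRL.
have -> : (2 * n - 2 = n.-1 + n.-1)%N by lia.
have [Q hQ] := resid_proj_exists (invmx Gam *m Z).
pose w tau := Q *m (invmx Gam *m c tau).
(* for [k < 1] the test always rejects, the likelihood ratio being at least [1] *)
pose t tau := if k < 1 then -1 else Num.sqrt (2 * ln k * dot (w tau) (w tau)).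
have [h [hH1 hE]] := in_H1_exists_abs_gt (fun tau => (w tau)^T *m invmx Gam) t n1_gt0.
exists h; split => // x; rewrite hE (lr_test_rejectsE _ hGam hQ _ _ n1_gt0).
suff tE tau : t tau < `|((w tau)^T *m invmx Gam *m x) 0 0| <->
              k < expR (change_score c Gam Q tau x / 2).
  by split=> [] [tau /tE]; exists tau.
rewrite -mulmxA /t /change_score -/(w tau) -/(dot _ _).
case: (ltrP k 1) => [k_lt1|k_ge1].
  have : 1 <= expR (dot (w tau) (invmx Gam *m x) ^+ 2 / dot (w tau) (w tau) / 2).
    by rewrite -expR0 ler_expR !divr_ge0 ?sqr_ge0 ?dot_ge0.
  by have := normr_ge0 (dot (w tau) (invmx Gam *m x)); split => _; lra.
apply: iff_sym; apply: lt_expR_score => //; first exact: dot_ge0.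
by move=> /eqP; rewrite dot_eq0 => /eqP ->; rewrite dot0l.
Qed.
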